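(* Let $P$ be a rooted tree poset with $n$ elements. Then $\deg(\partial)\ge n$, with equality if and only if $P$ is a rooted star poset.
   Context: Labelings of $P$ are bijections $P\to[n]$; $\Lambda(P)$ is the set of labelings. Promotion $\partial:\Lambda(P)\to\Lambda(P)$: for non-maximal $x$, the $L$-successor of $x$ is the element greater than $x$ with minimal label; the promotion chain is $v_1=L^{-1}(1)$, $v_{i+1}$ the $L$-successor of $v_i$, ending at the first maximal $v_m$; $\partial(L)(x)=L(x)-1$ off the chain, $\partial(L)(v_i)=L(v_{i+1})-1$ for $i<m$, $\partial(L)(v_m)=n$. A rooted tree poset is a connected poset in which each element is covered by at most one element. A rooted star poset is a rooted tree poset whose root covers every other element. $\deg(f)=\frac{1}{|X|}\sum_{x\in X}|f^{-1}(x)|^2$ for $f:X\to X$, here with $X=\Lambda(P)$. *)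

From mathcomp Require Import all_boot all_order all_algebra.
Set Implicit Arguments. Unset Strict Implicit. Unset Printing Implicit Defensive.
Import Order.TTheory GRing.Theory Num.Theory.
Local Open Scope order_scope.

Section Promotion.
Context {d : Order.disp_t} (P : finPOrderType d).

Definition covers (x y : P) : bool :=
  (x < y) && [forall z : P, ~~ ((x < z) && (z < y))].

Definition maximal (x : P) : bool := [forall y : P, ~~ (x < y)].

Definition connected_poset : bool :=
  (0 < #|P|)%N && [forall x : P, forall y : P, connect (fun a b : P => a >=< b) x y].

Definition rooted_tree_poset : bool :=
  connected_poset &&
  [forall x : P, forall y : P, forall z : P, covers x y && covers x z ==> (y == z)].

Definition rooted_star_poset : bool :=
  rooted_tree_poset &&
  [exists r : P, [forall x : P, (x != r) ==> covers x r]].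

(* labelings P -> [n], with [n] encoded as 'I_n = {0,...,n-1} *)
Definition label_fun := {ffun P -> 'I_#|P|}.

Definition labelings : {set label_fun} := [set L : label_fun | injectiveb L].

(* L-successor of x: the element greater than x with minimal label;
   None iff x is maximal *)
Definition succ (L : label_fun) (x : P) : option P :=
  [pick y : P | (x < y) && [forall z : P, (x < z) ==> (L y <= L z)%N]].

(* the chain x, succ x, succ (succ x), ... up to the first maximal element
   (fuel k suffices once k >= #|P|, as the chain strictly increases) *)
Fixpoint chain_from (L : label_fun) (k : nat) (x : P) : seq P :=
  x :: match k, succ L x with
       | k'.+1, Some y => chain_from L k' y
       | _, _ => [::]
       end.

(* the promotion chain v_1, ..., v_m, starting at the element labelled 1 *)
Definition promotion_chain (L : label_fun) : seq P :=
  if [pick x : P | nat_of_ord (L x) == 0%N] is Some v1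
  then chain_from L #|P| v1 else [::].

(* the promoted labeling (values as natural numbers, 0-based) *)
Definition promotion (L : label_fun) (x : P) : nat :=
  let c := promotion_chain L in
  if x \in c then
    let i := index x c in
    if (i.+1 < size c)%N then (L (nth x c i.+1)).-1 else (#|P|).-1
  else (L x).-1.

Definition promotion_fiber (L : label_fun) : nat :=
  #|[set L' in labelings | [forall x : P, promotion L' x == nat_of_ord (L x)]]|.

Definition deg_promotion : rat :=
  ((\sum_(L in labelings) (promotion_fiber L ^ 2)%N)%:R / (#|labelings|)%:R)%R.

End Promotion.

(* A rooted tree has a top element [r], and every promotion chain ends at it,
   so every promoted labeling gives [r] the largest label.  The promotion
   fibers thus vanish outside the labelings with top label at [r], a set of
   size |Λ|/n by symmetry, and they sum to |Λ|; hence
   Σ |fiber|² = n |Λ| + Σ_(L r = n) (|fiber L| - n)², giving deg ≥ n with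
   equality iff all these fibers have size exactly n.  A preimage of [L] is
   recovered from its promotion chain [c] by moving every label one step up
   the cycle [c].  In a rooted star the chains are [x; r] and [r], giving
   exactly n preimages; a chain x < p < r yields one more preimage of any
   linear extension. *)

From mathcomp Require Import all_boot all_order all_algebra.
From mathcomp Require Import zify.
Import Order.TTheory GRing.Theory Num.Theory.

Set Implicit Arguments. Unset Strict Implicit. Unset Printing Implicit Defensive.

Lemma succ_modn_inj m a b : a < m -> b < m -> a.+1 %% m = b.+1 %% m -> a = b.
Proof.
move=> am bm; rewrite -[a.+1]addn1 -[b.+1]addn1 => /eqP.
by rewrite eqn_modDr !modn_small // => /eqP.
Qed.

Section Successor.
Context {d : Order.disp_t} (P : finPOrderType d).
Local Notation n := #|P|.
Implicit Types (L : label_fun P) (x y z : P).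

Lemma succ_gt L x y : succ L x = Some y -> (x < y)%O.
Proof. by rewrite /succ; case: pickP => // z /andP[xz _] [<-]. Qed.

Lemma succ_min L x y : succ L x = Some y -> forall z, (x < z)%O -> L y <= L z.
Proof.
rewrite /succ; case: pickP => // w /andP[_ /forallP min_w] [<-] z xz.
exact: (implyP (min_w z) xz).
Qed.

Lemma succ_None_maximal L x : succ L x = None -> maximal x.
Proof.
rewrite /succ; case: pickP => // none _; apply/forallP => y; apply/negP => xy.
have [m xm min_m] := arg_minnP (fun z => nat_of_ord (L z)) xy.
move: (none m); rewrite xm /= => /negP; apply; apply/forallP => z.
by apply/implyP => xz; exact: min_m.
Qed.

Lemma maximal_succ_None L x : maximal x -> succ L x = None.
Proof.
move/forallP=> max_x; rewrite /succ; case: pickP => // y /andP[xy _].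
by move: (max_x y); rewrite xy.
Qed.

Lemma succ_eq_Some L x y : injective L -> (x < y)%O ->
  (forall z, (x < z)%O -> L y <= L z) -> succ L x = Some y.
Proof.
move=> inj xy min_y; case e: (succ L x) => [w|].
  have := succ_min e xy; have := min_y w (succ_gt e) => le_yw le_wy.
  by congr Some; apply/inj/val_inj/eqP; rewrite eqn_leq le_yw le_wy.
by have /forallP/(_ y) := succ_None_maximal e; rewrite xy.
Qed.

Definition succ_rel L : rel P := fun a b => succ L a == Some b.

Lemma succ_rel_lt L : subrel (succ_rel L) <%O.
Proof. by move=> a b /eqP; apply: succ_gt. Qed.

Lemma chain_from_path L k x : path (succ_rel L) x (behead (chain_from L k x)).
Proof.
elim: k x => [|k IH] x //=; case e: (succ L x) => [y|] //=.
have -> : chain_from L k y = y :: behead (chain_from L k y) by case: k {IH}.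
by rewrite /= /succ_rel e eqxx IH.
Qed.

Lemma chain_from_end L k x :
  succ L (last x (behead (chain_from L k x))) = None \/
  size (behead (chain_from L k x)) = k.
Proof.
elim: k x => [|k IH] x /=; first by right.
case e: (succ L x) => [y|] /=; last by left.
by have := IH y; case: k {IH} => [|k] /=; [right | case=> ->; [left|right]].
Qed.

Lemma chain_fromE L k x t : path (succ_rel L) x t -> succ L (last x t) = None ->
  size t <= k -> chain_from L k x = x :: t.
Proof.
elim: t k x => [|y t IH] k x /=.
  by move=> _ e _; case: k => [|k] //=; rewrite e.
move=> /andP[/eqP e pt] el; case: k => [|k] //= sk.
by rewrite e (IH k y pt el sk).
Qed.

Lemma uniq_size_le_card (s : seq P) : uniq s -> size s <= n.
Proof. by move/card_uniqP => <-; exact: max_card. Qed.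

Lemma label0_exists L : 0 < n -> injective L -> exists v, nat_of_ord (L v) = 0.
Proof.
move=> n_gt0 inj; have := inj_card_onto inj _ (Ordinal n_gt0).
by rewrite card_ord => /(_ (leqnn _)) /codomP [v Lv]; exists v; rewrite -Lv.
Qed.

Lemma promotion_chainE L v : injective L -> nat_of_ord (L v) = 0 ->
  promotion_chain L = chain_from L n v.
Proof.
move=> inj Lv; rewrite /promotion_chain; case: pickP => [w /eqP Lw|/(_ v)].
  by have -> : w = v by apply/inj/val_inj; rewrite /= Lw Lv.
by rewrite Lv eqxx.
Qed.

Lemma promotion_chain_cons L : 0 < n -> injective L ->
  exists v t, nat_of_ord (L v) = 0 /\ promotion_chain L = v :: t.
Proof.
move=> n_gt0 inj; have [v Lv] := label0_exists n_gt0 inj.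
exists v, (behead (chain_from L n v)); split=> //.
by rewrite (promotion_chainE inj Lv); case: (n).
Qed.

Lemma label_lt_pred_card L x y : injective L -> nat_of_ord (L y) = n.-1 ->
  x != y -> L x < n.-1.
Proof.
move=> inj Ly xy; have : (L x : nat) <= n.-1 by rewrite -ltnS (ltn_predK (ltn_ord (L x))).
rewrite leq_eqVlt -Ly => /orP[/eqP e|//].
by case/negP: xy; apply/eqP/inj/val_inj.
Qed.

End Successor.

Section PromotionChain.
Context {d : Order.disp_t} (P : finPOrderType d).
Local Notation n := #|P|.
Variables (L : label_fun P) (v : P) (t : seq P).
Hypothesis inj : injective L.
Hypothesis Lv : nat_of_ord (L v) = 0.
Hypothesis chainE : promotion_chain L = v :: t.

Let tE : t = behead (chain_from L n v).
Proof. by rewrite -(promotion_chainE inj Lv) chainE. Qed.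

Lemma promotion_chain_path : path (succ_rel L) v t.
Proof. by rewrite tE; exact: chain_from_path. Qed.

Lemma promotion_chain_sorted : sorted <%O (v :: t).
Proof. exact: sub_path (@succ_rel_lt _ _ L) _ _ promotion_chain_path. Qed.

Lemma promotion_chain_uniq : uniq (v :: t).
Proof. exact: lt_sorted_uniq promotion_chain_sorted. Qed.

Lemma promotion_chain_last_maximal : maximal (last v t).
Proof.
have := chain_from_end L n v; rewrite -tE => -[|size_t].
  exact: succ_None_maximal.
by have := uniq_size_le_card promotion_chain_uniq; rewrite /= size_t ltnn.
Qed.

Let n_gt0 : 0 < n. Proof. by apply/card_gt0P; exists v. Qed.

Lemma promotion_last : promotion L (last v t) = n.-1.
Proof.
rewrite /promotion chainE mem_last.
have -> : index (last v t) (v :: t) = size t.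
  by rewrite -[last v t](nth_last v (v :: t)) index_uniq ?promotion_chain_uniq.
by rewrite /= ltnn.
Qed.

Lemma label_prev_promotion y :
  nat_of_ord (L y) = (promotion L (prev (v :: t) y)).+1 %% n.
Proof.
have U := promotion_chain_uniq.
have Lnz : y != v -> (L y).-1.+1 = L y.
  move=> yv; apply: prednK; rewrite lt0n; apply: contra yv => /eqP Ly.
  by apply/eqP/inj/val_inj; rewrite /= Ly Lv.
case yc: (y \in v :: t); last first.
  rewrite prev_nth yc /promotion chainE yc Lnz ?modn_small //.
  by apply: contraFneq yc => ->; rewrite mem_head.
case: (eqVneq y v) => [->|yv].
  have -> : prev (v :: t) v = last v t.
    rewrite prev_nth mem_head /= memNindex; last by case/andP: U.
    exact: (nth_last v (v :: t)).
  by rewrite promotion_last prednK // modnn Lv.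
have yt : y \in t by move: yc; rewrite inE (negbTE yv).
have it : index y t < size t by rewrite index_mem.
rewrite prev_nth yc; set w := nth v (v :: t) (index y t).
have wc : w \in v :: t by rewrite mem_nth // ltnS ltnW.
have iw : index w (v :: t) = index y t by rewrite index_uniq // ltnS ltnW.
rewrite /promotion chainE wc iw ltnS it /= nth_index //.
by rewrite Lnz // modn_small.
Qed.

Lemma label_next_promotion x :
  nat_of_ord (L (next (v :: t) x)) = (promotion L x).+1 %% n.
Proof. by rewrite label_prev_promotion prev_next // promotion_chain_uniq. Qed.

Lemma promotion_inj : injective (promotion L).
Proof.
move=> a b e; apply: (can_inj (prev_next promotion_chain_uniq)).
by apply/inj/val_inj; rewrite /= !label_next_promotion e.
Qed.

End PromotionChain.

Section Promoted.
Context {d : Order.disp_t} (P : finPOrderType d).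
Local Notation n := #|P|.
Implicit Types (L : label_fun P) (x : P).

Lemma promotion_lt_card L x : 0 < n -> promotion L x < n.
Proof.
move=> n_gt0; rewrite /promotion; case: ifP => _; last by rewrite (leq_ltn_trans (leq_pred _)).
by case: ifP => _; [rewrite (leq_ltn_trans (leq_pred _)) | rewrite prednK].
Qed.

(* The fallback [L x] is never taken: promotion values are below [n]. *)
Definition promoted L : label_fun P :=
  [ffun x => odflt (L x) (insub (promotion L x))].

Lemma promotedE L x : 0 < n -> nat_of_ord (promoted L x) = promotion L x.
Proof.
move=> n_gt0; rewrite ffunE; case: insubP => [u _ -> //|].
by rewrite promotion_lt_card.
Qed.

Lemma promoted_inj L : 0 < n -> injective L -> injective (promoted L).
Proof.
move=> n_gt0 inj; have [v [t [Lv chainE]]] := promotion_chain_cons n_gt0 inj.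
move=> a b e; apply: (promotion_inj inj Lv chainE).
by rewrite -!promotedE // e.
Qed.

Lemma promoted_top L r : injective L -> (forall x, (x <= r)%O) ->
  nat_of_ord (promoted L r) = n.-1.
Proof.
have n_gt0 : 0 < n by apply/card_gt0P; exists r.
move=> inj top_r; have [v [t [Lv chainE]]] := promotion_chain_cons n_gt0 inj.
rewrite promotedE //; have := promotion_chain_last_maximal inj Lv chainE.
have := top_r (last v t); rewrite le_eqVlt => /orP[/eqP <-|lt_r].
  by rewrite (promotion_last inj Lv chainE).
by move/forallP/(_ r); rewrite lt_r.
Qed.

End Promoted.

Section Unpromote.
Context {d : Order.disp_t} (P : finPOrderType d).
Local Notation n := #|P|.
Implicit Types (L : label_fun P) (c : seq P).

(* The candidate preimage of [L] under promotion along the chain [c]: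
   labels move up by one to the next element of the cycle [c]. *)
Definition unpromote L c : label_fun P := [ffun y => ordS (L (prev c y))].

Lemma unpromoteE L c y : nat_of_ord (unpromote L c y) = (L (prev c y)).+1 %% n.
Proof. by rewrite ffunE. Qed.

Lemma unpromote_inj L c : uniq c -> injective L -> injective (unpromote L c).
Proof.
move=> U inj a b; rewrite !ffunE => /(can_inj (@ordSK _)) /inj.
exact: (can_inj (next_prev U)).
Qed.

Variables (L : label_fun P) (v : P) (t : seq P).
Hypothesis inj : injective L.
Hypothesis sorted_c : sorted <%O (v :: t).
Hypothesis last_maximal : maximal (last v t).
Hypothesis L_last : nat_of_ord (L (last v t)) = n.-1.
Hypothesis L_increasing : forall a, a \in v :: t -> a != last v t ->
  forall z, (a < z)%O -> L a < L z.

Local Notation c := (v :: t).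
Let U : uniq c := lt_sorted_uniq sorted_c.
Let n_gt0 : 0 < n. Proof. by apply/card_gt0P; exists v. Qed.

Let label_succ_small w : w != last v t -> (L w).+1 %% n = (L w).+1.
Proof. by move=> wl; rewrite modn_small // -ltn_predRL (label_lt_pred_card inj L_last). Qed.

Let nth_lt i j : i < j -> j <= size t -> (nth v c i < nth v c j)%O.
Proof.
move=> ij js; apply: (sorted_ltn_nth lt_trans) => //; rewrite inE /= ltnS //.
exact: leq_trans (ltnW ij) js.
Qed.

Let nth_neq_last i : i < size t -> nth v c i != last v t.
Proof.
move=> it; rewrite -[last v t](nth_last v c); apply/negP => /eqP e.
have := congr1 (index^~ c) e; rewrite !index_uniq //= ?ltnS ?(ltnW it) // => ei.
by move: it; rewrite ei ltnn.
Qed.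

Let prev_neq_last z : z != v -> prev c z != last v t.
Proof.
move=> zv; case zc: (z \in c); last first.
  by rewrite prev_nth zc; apply: contraFneq zc => ->; rewrite mem_last.
have zt : z \in t by move: zc; rewrite inE (negbTE zv).
by rewrite prev_nth zc nth_neq_last // index_mem.
Qed.

Let label_le_prev i z : i < size t -> (nth v c i < z)%O ->
  L (nth v c i) <= L (prev c z).
Proof.
move=> it az; set a := nth v c i.
have anl : a != last v t by exact: nth_neq_last.
have ac : a \in c by rewrite mem_nth // ltnS ltnW.
case zc: (z \in c); last by rewrite prev_nth zc ltnW // L_increasing.
case: (eqVneq z v) => [zv|zv].
  move: az; rewrite zv; case: (posnP i) => [-> | ip]; first by rewrite ltxx.
  by move/(lt_trans (nth_lt ip (ltnW it))); rewrite ltxx.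
have zt : z \in t by move: zc; rewrite inE (negbTE zv).
have jt : index z t < size t by rewrite index_mem.
have zE : z = nth v c (index z t).+1 by rewrite /= nth_index.
rewrite prev_nth zc; case: (ltngtP i (index z t)) => [ij|ji|<-] //.
  by rewrite ltnW // L_increasing // nth_lt // ltnW.
have : (z <= a)%O.
  rewrite zE; move: ji; rewrite leq_eqVlt => /orP[/eqP -> | lt_ji].
    exact: lexx.
  exact: ltW (nth_lt lt_ji (ltnW it)).
by move/(lt_le_trans az); rewrite ltxx.
Qed.

Lemma unpromote_head : nat_of_ord (unpromote L c v) = 0.
Proof.
rewrite unpromoteE; have -> : prev c v = last v t.
  rewrite prev_nth mem_head /= memNindex; last by case/andP: U.
  exact: (nth_last v c).
by rewrite L_last prednK // modnn.
Qed.

Lemma unpromote_succ i : i < size t ->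
  succ (unpromote L c) (nth v c i) = Some (nth v t i).
Proof.
move=> it; set a := nth v c i; set b := nth v t i.
have ab : (a < b)%O by rewrite (nth_lt (ltnSn i)).
have above_a_neq_v z : (a < z)%O -> z != v.
  move=> az; apply: contraTneq az => ->; rewrite le_gtF //.
  by rewrite /a; case: (posnP i) => [->|ip]; [exact: lexx | exact: ltW (nth_lt ip (ltnW it))].
have prev_b : prev c b = a.
  rewrite prev_nth (_ : b \in c); last by rewrite inE mem_nth ?orbT.
  by rewrite /= index_uniq //; case/andP: U.
apply: succ_eq_Some => //; first exact: unpromote_inj.
move=> z az; rewrite !unpromoteE prev_b.
rewrite !label_succ_small ?nth_neq_last ?prev_neq_last ?above_a_neq_v //.
by rewrite ltnS label_le_prev.
Qed.

Lemma unpromote_chain : promotion_chain (unpromote L c) = c.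
Proof.
rewrite (promotion_chainE (unpromote_inj U inj) unpromote_head).
apply: chain_fromE; last by have := uniq_size_le_card U; rewrite /= => /ltnW.
  by apply/(pathP v) => i it; rewrite /succ_rel unpromote_succ.
exact: maximal_succ_None.
Qed.

Lemma promotion_unpromote x : promotion (unpromote L c) x = L x.
Proof.
have inj' := unpromote_inj U inj.
apply: succ_modn_inj; [exact: promotion_lt_card | exact: ltn_ord |].
have := label_prev_promotion inj' unpromote_head unpromote_chain (next c x).
by rewrite prev_next // => <-; rewrite unpromoteE prev_next.
Qed.

End Unpromote.

Section TreePoset.
Context {d : Order.disp_t} (P : finPOrderType d).
Implicit Types (x y z : P).

Definition card_below x := #|[set u : P | (u < x)%O]|.
Definition card_above x := #|[set u : P | (x < u)%O]|.

Lemma card_below_lt x y : (x < y)%O -> card_below x < card_below y.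
Proof.
move=> xy; apply/proper_card/properP; split; last by exists x; rewrite !inE ?ltxx.
by apply/subsetP => u; rewrite !inE => /lt_trans; apply.
Qed.

Lemma card_above_lt x y : (x < y)%O -> card_above y < card_above x.
Proof.
move=> xy; apply/proper_card/properP; split; last by exists y; rewrite !inE ?ltxx.
by apply/subsetP => u; rewrite !inE; apply: lt_trans.
Qed.

Lemma exists_cover_le x y : (x < y)%O -> exists2 w, covers x w & (w <= y)%O.
Proof.
move=> xy; have xyy : (x < y)%O && (y <= y)%O by rewrite xy lexx.
have [w /andP[xw wy] min_w] :=
  @arg_minnP _ y (fun w => (x < w)%O && (w <= y)%O) card_below xyy.
exists w => //; rewrite /covers xw; apply/forallP => z; apply/negP => /andP[xz zw].
have := min_w z; rewrite xz (ltW (lt_le_trans zw wy)) => /(_ isT).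
by rewrite leqNgt card_below_lt.
Qed.

Lemma exists_maximal_ge x : exists2 m, (x <= m)%O & maximal m.
Proof.
have [m xm max_m] := @arg_maxnP _ x (fun w => (x <= w)%O) card_below (lexx x).
exists m => //; apply/forallP => y; apply/negP => my.
by have /= := max_m y (le_trans xm (ltW my)); rewrite leqNgt card_below_lt.
Qed.

Lemma top_maximal r : (forall x, (x <= r)%O) -> maximal r.
Proof. by move=> top_r; apply/forallP => y; rewrite lt_leAnge top_r andbF. Qed.

Lemma maximal_ge_eq m y : maximal m -> (m <= y)%O -> m = y.
Proof. by move=> /forallP/(_ y); rewrite le_eqVlt => /negbTE -> /orP[/eqP|]. Qed.

Section UniqueCovers.
Hypothesis unique_cover : [forall x : P, forall y : P, forall z : P,
  covers x y && covers x z ==> (y == z)].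

(* Two elements above [x] lie above the unique cover of [x]; induct on
   the number of elements above [x]. *)
Lemma above_comparable x y z : (x < y)%O -> (x < z)%O -> (y >=< z)%O.
Proof.
move: {2}(card_above x) (leqnn (card_above x)) => k.
elim: k x y z => [|k IH] x y z above_x xy xz.
  by move: above_x; rewrite leqn0 => /eqP/cards0_eq/setP/(_ y); rewrite !inE xy.
have [wy cy wyy] := exists_cover_le xy; have [wz cz wzz] := exists_cover_le xz.
have wyz : wy = wz.
  by apply/eqP; move/forallP/(_ x)/forallP/(_ wy)/forallP/(_ wz): unique_cover; rewrite cy cz.
subst wz.
move: wyy wzz; rewrite !le_eqVlt => /orP[/eqP <-|wy1] /orP[/eqP <-|wz1].
- exact: comparablexx.
- exact: lt_comparable.
- exact: gt_comparable.
apply: (IH wy) => //; rewrite -ltnS.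
exact: leq_trans (card_above_lt (andP cy).1) above_x.
Qed.

Lemma maximal_ge_unique x m1 m2 : (x <= m1)%O -> (x <= m2)%O ->
  maximal m1 -> maximal m2 -> m1 = m2.
Proof.
rewrite !le_eqVlt => /orP[/eqP <-|l1] /orP[/eqP <-|l2] max1 max2 //.
- exact: maximal_ge_eq (ltW l2).
- exact/esym/(maximal_ge_eq max2)/ltW.
by have /orP[] := above_comparable l1 l2 => h;
  [exact: maximal_ge_eq | exact/esym/maximal_ge_eq].
Qed.

Lemma connected_top : connected_poset P -> exists r, forall x, (x <= r)%O.
Proof.
case/andP=> /card_gt0P [x0 _] /forallP/(_ x0) /forallP conn.
have [m x0m max_m] := exists_maximal_ge x0; exists m => y.
have /connectP [p pth ->] := conn y.
elim: p x0 x0m {conn} pth => [|b p IH] a am //= /andP[ab pth].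
apply: IH pth; case/orP: ab => [ab|ba]; last exact: le_trans ba am.
have [mb bmb max_mb] := exists_maximal_ge b.
by rewrite -(maximal_ge_unique (le_trans ab bmb) am max_mb max_m).
Qed.

End UniqueCovers.

Lemma rooted_tree_top : rooted_tree_poset P -> exists r, forall x, (x <= r)%O.
Proof. by case/andP=> conn uniq_cover; exact: connected_top. Qed.

Section Rooted.
Variable r : P.
Hypothesis top_r : forall x, (x <= r)%O.

Lemma rooted_star_above : rooted_star_poset P ->
  forall x y, x != r -> (x < y)%O -> y = r.
Proof.
case/andP=> _ /existsP [r' /forallP cover_r'].
have r'r : r' = r.
  apply/eqP/negPn/negP => r'r; have /andP[rr' _] : covers r r'.
    by apply: (implyP (cover_r' r)); rewrite eq_sym.
  by move: (top_r r'); rewrite lt_geF.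
subst r'.
move=> x y xr xy; have /andP[_ /forallP no_between] := implyP (cover_r' x) xr.
have := top_r y; rewrite le_eqVlt => /orP[/eqP //|yr].
by have := no_between y; rewrite xy yr.
Qed.

Lemma not_rooted_star_chain : rooted_tree_poset P -> ~~ rooted_star_poset P ->
  exists x p, (x < p)%O /\ (p < r)%O.
Proof.
rewrite /rooted_star_poset => -> /existsPn /(_ r) /forallPn [x].
rewrite negb_imply => /andP[xr]; have xlr : (x < r)%O by rewrite lt_neqAle xr top_r.
by rewrite /covers xlr => /forallPn [p]; rewrite negbK => /andP[xp pr]; exists x, p.
Qed.

End Rooted.

End TreePoset.

Section LinearExtension.
Context {d : Order.disp_t} (P : finPOrderType d).
Local Notation n := #|P|.
Implicit Types (x y : P).

(* An injective key that increases along [<], so ranking by it gives a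
   linear extension. *)
Definition linext_key x := card_below x * n + enum_rank x.

Lemma linext_key_lt x y : (x < y)%O -> linext_key x < linext_key y.
Proof.
move=> xy; rewrite /linext_key (leq_trans (_ : _ < (card_below x).+1 * n)) //.
  by rewrite mulSn addnC ltn_add2r.
by rewrite (leq_trans _ (leq_addr _ _)) // leq_mul2r card_below_lt ?orbT.
Qed.

Lemma linext_key_inj : injective linext_key.
Proof.
move=> x y /(congr1 (modn^~ n)); rewrite /linext_key !modnMDl !modn_small //.
by move/val_inj/enum_rank_inj.
Qed.

Lemma linext_rank_lt x : #|[set u | linext_key u < linext_key x]| < n.
Proof.
rewrite -cardsT; apply/proper_card/properP; split; first exact: subsetT.
by exists x; rewrite ?inE ?ltnn.
Qed.

Definition linext : label_fun P := [ffun x => Ordinal (linext_rank_lt x)].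

Lemma linext_mono x y : linext_key x < linext_key y -> linext x < linext y.
Proof.
move=> xy; rewrite !ffunE; apply/proper_card/properP; split.
  by apply/subsetP => u; rewrite !inE => /ltn_trans; apply.
by exists x; rewrite !inE ?ltnn.
Qed.

Lemma linext_lt x y : (x < y)%O -> linext x < linext y.
Proof. by move=> xy; apply/linext_mono/linext_key_lt. Qed.

Lemma linext_inj : injective linext.
Proof.
move=> x y e; apply: linext_key_inj.
by case: (ltngtP (linext_key x) (linext_key y)) => // /linext_mono; rewrite e ltnn.
Qed.

Lemma linext_top r : (forall x, (x <= r)%O) -> nat_of_ord (linext r) = n.-1.
Proof.
move=> top_r; rewrite ffunE /=.
have -> : [set u | linext_key u < linext_key r] = [set~ r]; last by rewrite cardsC1.
apply/setP => u; rewrite !inE; case: (eqVneq u r) => [->|ur]; first by rewrite ltnn.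
by rewrite linext_key_lt // lt_neqAle ur top_r.
Qed.

End LinearExtension.

Section Fibers.
Context {d : Order.disp_t} (P : finPOrderType d).
Local Notation n := #|P|.
Local Notation labelings := (labelings P).
Implicit Types (L : label_fun P) (x z : P).

Definition fiber L := [set L' in labelings | promoted L' == L].

Lemma mem_labelings L : (L \in labelings) = injectiveb L.
Proof. by rewrite inE. Qed.

Section NonEmpty.
Hypothesis n_gt0 : 0 < n.

Lemma promotion_fiberE L : promotion_fiber L = #|fiber L|.
Proof.
congr #|pred_of_set _|; apply/setP => L'; rewrite !inE.
case: (injectiveb L') => //=; apply/forallP/eqP => [eqL|<- x]; last by rewrite promotedE.
by apply/ffunP => x; apply: val_inj; rewrite /= promotedE //; apply/eqP.
Qed.

Lemma sum_promotion_fiber : \sum_(L in labelings) promotion_fiber L = #|labelings|.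
Proof.
rewrite -[RHS]sum1_card [RHS](partition_big (@promoted _ P) (mem labelings)) /=.
  apply: eq_bigr => L _; rewrite promotion_fiberE -sum1_card.
  by apply: eq_bigl => L'; rewrite !inE.
by move=> L; rewrite !mem_labelings => /injectiveP inj; apply/injectiveP/promoted_inj.
Qed.

Lemma unpromote_promoted L : injective L ->
  L = unpromote (promoted L) (promotion_chain L).
Proof.
move=> inj; have [v [t [Lv chainE]]] := promotion_chain_cons n_gt0 inj.
apply/ffunP => y; apply: val_inj.
by rewrite /= unpromoteE chainE (label_prev_promotion inj Lv chainE) promotedE.
Qed.

End NonEmpty.

Variable r : P.
Hypothesis top_r : forall x, (x <= r)%O.

Let n_gt0 : 0 < n. Proof. by apply/card_gt0P; exists r. Qed.

Lemma promotion_fiber_eq0 L : nat_of_ord (L r) != n.-1 -> promotion_fiber L = 0.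
Proof.
move=> Lr; rewrite promotion_fiberE //; apply/eqP; rewrite cards_eq0; apply/eqP/setP => L'.
rewrite !inE; apply/negP => /andP[/injectiveP inj /eqP eqL].
by move: Lr; rewrite -eqL promoted_top ?eqxx.
Qed.

Section TopLabel.
Variable L : label_fun P.
Hypothesis inj : injective L.
Hypothesis L_top : nat_of_ord (L r) = n.-1.

Lemma unpromote_in_fiber v t : sorted <%O (v :: t) -> last v t = r ->
  (forall a, a \in v :: t -> a != r -> forall z, (a < z)%O -> L a < L z) ->
  unpromote L (v :: t) \in fiber L.
Proof.
move=> sorted_c last_r L_increasing.
have inj' := unpromote_inj (lt_sorted_uniq sorted_c) inj.
rewrite !inE; apply/andP; split; first exact/injectiveP.
apply/eqP/ffunP => x; apply: val_inj; rewrite /= promotedE //.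
by apply: promotion_unpromote; rewrite ?last_r //; exact: top_maximal.
Qed.

Definition star_tail x : seq P := if x == r then [::] else [:: r].

Lemma star_chain_sorted x : sorted <%O (x :: star_tail x).
Proof. by rewrite /star_tail; case: eqVneq => //= xr; rewrite lt_neqAle xr top_r. Qed.

Lemma last_star_tail x : last x (star_tail x) = r.
Proof. by rewrite /star_tail; case: eqVneq. Qed.

Definition star_preimages := [set unpromote L (x :: star_tail x) | x : P].

Lemma unpromote_star_head x : nat_of_ord (unpromote L (x :: star_tail x) x) = 0.
Proof. by apply: unpromote_head; rewrite ?last_star_tail // star_chain_sorted. Qed.

Lemma card_star_preimages : #|star_preimages| = n.
Proof.
rewrite card_imset // => x y e.
apply: (unpromote_inj (lt_sorted_uniq (star_chain_sorted x)) inj); apply: val_inj.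
by rewrite /= unpromote_star_head e unpromote_star_head.
Qed.

Lemma unpromote_star_in_fiber x : (forall z, (x < z)%O -> L x < L z) ->
  unpromote L (x :: star_tail x) \in fiber L.
Proof.
move=> L_x; apply: unpromote_in_fiber; rewrite ?star_chain_sorted ?last_star_tail //.
move=> a; rewrite /star_tail; case: eqVneq => [-> | _]; rewrite !inE.
  by move=> /eqP -> /negP.
by case/orP => /eqP -> //; rewrite eqxx.
Qed.

End TopLabel.

Lemma rooted_star_fiber L : rooted_star_poset P -> injective L ->
  nat_of_ord (L r) = n.-1 -> fiber L = star_preimages L.
Proof.
move=> star inj Lr; apply/setP => L'; apply/idP/imsetP => [|[x _ ->]]; last first.
  apply: unpromote_star_in_fiber => // z xz.
  have xr : x != r by rewrite (lt_eqF (lt_le_trans xz (top_r z))).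
  by rewrite (rooted_star_above top_r star xr xz) Lr (label_lt_pred_card inj Lr).
rewrite !inE => /andP[/injectiveP inj' /eqP eqL].
have [v [t [Lv chainE]]] := promotion_chain_cons n_gt0 inj'.
exists v => //; rewrite {1}(unpromote_promoted n_gt0 inj') eqL.
rewrite (promotion_chainE inj' Lv); congr unpromote; apply: chain_fromE.
- rewrite /star_tail; case: (eqVneq v r) => [_|vr] //=; rewrite andbT /succ_rel.
  rewrite (@succ_eq_Some _ _ L' v r inj') ?lt_neqAle ?vr ?top_r //.
  by move=> z vz; rewrite (rooted_star_above top_r star vr vz).
- by rewrite last_star_tail; apply/maximal_succ_None/top_maximal.
- by rewrite /star_tail; case: eqVneq.
Qed.

Lemma linext_fiber_gt_card x p : (x < p)%O -> (p < r)%O ->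
  n < promotion_fiber (linext P).
Proof.
move=> xp pr; have inj := @linext_inj _ P; have L_top := linext_top top_r.
rewrite promotion_fiberE //; set c := [:: x; p; r].
have sub : unpromote (linext P) c |: star_preimages (linext P) \subset fiber (linext P).
  apply/subsetP => L' /setU1P[->|/imsetP[y _ ->]].
    by apply: unpromote_in_fiber => //=; rewrite ?xp ?pr // => a _ _ z; apply: linext_lt.
  by apply: unpromote_star_in_fiber => // z; apply: linext_lt.
have c_head : nat_of_ord (unpromote (linext P) c x) = 0.
  by apply: unpromote_head => //=; rewrite ?xp ?pr // => a _ _ z; apply: linext_lt.
have fresh : unpromote (linext P) c \notin star_preimages (linext P).
  apply/imsetP => -[y _ e]; have yx : y = x.
    apply: (unpromote_inj (lt_sorted_uniq (star_chain_sorted y)) inj).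
    by apply: val_inj; rewrite /= unpromote_star_head // -e c_head.
  subst y; have := congr1 (fun L' : label_fun P => nat_of_ord (L' p)) e.
  rewrite !unpromoteE => /(succ_modn_inj (ltn_ord _) (ltn_ord _)) /val_inj /inj.
  have xr : x != r by rewrite lt_eqF // (lt_trans xp pr).
  have -> : prev c p = x by rewrite /c /= eqxx.
  have -> : prev (x :: star_tail x) p = p.
    by rewrite prev_nth /star_tail (negbTE xr) !inE (gt_eqF xp) (lt_eqF pr).
  by move=> ex; move: xp; rewrite ex ltxx.
have := subset_leq_card sub; rewrite cardsU1 fresh card_star_preimages //.
Qed.

End Fibers.

Section Degree.
Context {d : Order.disp_t} (P : finPOrderType d).
Local Notation n := #|P|.
Local Notation labelings := (labelings P).
Implicit Types (L : label_fun P).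

Variable r : P.
Hypothesis top_r : forall x, (x <= r)%O.

Let n_gt0 : 0 < n. Proof. by apply/card_gt0P; exists r. Qed.
Let top_lt : n.-1 < n. Proof. by rewrite ltn_predL. Qed.
Let top : 'I_n := Ordinal top_lt.

Definition labelings_at (k : 'I_n) := [set L in labelings | L r == k].

Definition swap_top (k i : 'I_n) := if i == k then top else if i == top then k else i.

Lemma swap_topK k : involutive (swap_top k).
Proof.
move=> i; rewrite /swap_top; case: (eqVneq i k) => [->|ik].
  by case: (eqVneq top k) => [->|_]; rewrite ?eqxx.
case: (eqVneq i top) => [->|itop]; first by rewrite eqxx.
by rewrite (negbTE ik) (negbTE itop).
Qed.

Lemma card_labelings_at_swap k a : #|labelings_at a| <= #|labelings_at (swap_top k a)|.
Proof.
pose relabel L : label_fun P := [ffun x => swap_top k (L x)].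
have relabelK : involutive relabel by move=> L; apply/ffunP => x; rewrite !ffunE swap_topK.
rewrite -(card_imset _ (can_inj relabelK)); apply/subset_leq_card/subsetP => L'.
case/imsetP => L; rewrite !inE => /andP[/injectiveP inj /eqP La] ->.
rewrite ffunE La eqxx andbT; apply/injectiveP => x y; rewrite !ffunE.
by move/(can_inj (swap_topK k))/inj.
Qed.

Lemma card_labelings_at k : #|labelings_at k| = #|labelings_at top|.
Proof.
have := card_labelings_at_swap k k; have := card_labelings_at_swap k top.
have -> : swap_top k top = k by rewrite /swap_top; case: (eqVneq top k) => [->|]; rewrite ?eqxx.
by rewrite /swap_top eqxx => le_top_k le_k_top; apply/eqP; rewrite eqn_leq le_top_k le_k_top.
Qed.

Lemma card_labelings : #|labelings| = n * #|labelings_at top|.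
Proof.
rewrite -sum1_card (partition_big (fun L : label_fun P => L r) predT) //=.
rewrite (eq_bigr (fun _ => #|labelings_at top|)); first by rewrite sum_nat_const card_ord.
move=> k _; rewrite -(card_labelings_at k) -sum1_card.
by apply: eq_bigl => L; rewrite !inE.
Qed.

Lemma sum_labelings_at_top (g : label_fun P -> nat) :
  (forall L, L r != top -> g L = 0) ->
  \sum_(L in labelings) g L = \sum_(L in labelings_at top) g L.
Proof.
move=> g0; rewrite (bigID (fun L : label_fun P => L r == top)) /= [X in _ + X]big1 ?addn0.
  by apply: eq_bigl => L; rewrite !inE.
by move=> L /andP[_]; exact: g0.
Qed.

(* With truncated subtraction one of the two terms vanishes, so each summand
   is the square of the distance between the fiber size and [n]. *)
Definition fiber_deviation := \sum_(L in labelings_at top)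
  ((promotion_fiber L - n) ^ 2 + (n - promotion_fiber L) ^ 2).

Lemma sum_promotion_fiber_sq :
  \sum_(L in labelings) promotion_fiber L ^ 2 = fiber_deviation + n * #|labelings|.
Proof.
have sum_top : \sum_(L in labelings_at top) promotion_fiber L = #|labelings|.
  rewrite -(sum_promotion_fiber n_gt0) (sum_labelings_at_top (g := @promotion_fiber _ P)) //.
  exact: promotion_fiber_eq0.
rewrite (sum_labelings_at_top (g := fun L => promotion_fiber L ^ 2)); last first.
  by move=> L /(promotion_fiber_eq0 top_r) ->.
have sq_id a b : a ^ 2 + b ^ 2 = (a - b) ^ 2 + (b - a) ^ 2 + 2 * (b * a) by nia.
have : \sum_(L in labelings_at top) (promotion_fiber L ^ 2 + n ^ 2) =
    \sum_(L in labelings_at top) ((promotion_fiber L - n) ^ 2 +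
      (n - promotion_fiber L) ^ 2 + 2 * (n * promotion_fiber L)).
  by apply: eq_bigr => L _; exact: sq_id.
rewrite !big_split /= -!big_distrr /= sum_top sum_nat_const -/fiber_deviation.
rewrite card_labelings /fiber_deviation big_split /= big1_eq.
set s := #|labelings_at top|; set S := \sum_(i in _) _ ^ 2.
set A := \sum_(i in _) (_ - _) ^ 2; set B := \sum_(i in _) (_ - _) ^ 2.
lia.
Qed.

Lemma fiber_deviation_eq0 : rooted_tree_poset P ->
  fiber_deviation = 0 <-> rooted_star_poset P.
Proof.
move=> tree; split => [dev0|star].
  apply/negPn/negP => nonstar; have [x [p [xp pr]]] := not_rooted_star_chain top_r tree nonstar.
  have lin : linext P \in labelings_at top.
    by rewrite !inE; apply/andP; split; [exact/injectiveP/linext_inj | apply/eqP/val_inj/linext_top].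
  move: dev0; rewrite /fiber_deviation (bigD1 _ lin) /= => /eqP.
  by rewrite !addn_eq0 expn_eq0 subn_eq0 leqNgt (linext_fiber_gt_card top_r xp pr).
apply/eqP; rewrite sum_nat_eq0; apply/forall_inP => L; rewrite !inE => /andP[/injectiveP inj /eqP Lr].
have Lr' : nat_of_ord (L r) = n.-1 by rewrite Lr.
by rewrite promotion_fiberE // (rooted_star_fiber top_r star inj Lr') card_star_preimages // subnn.
Qed.

Local Open Scope ring_scope.

Let card_labelings_neq0 : #|labelings|%:R != 0 :> rat.
Proof.
rewrite pnatr_eq0 -lt0n; apply/card_gt0P; exists (linext P).
by rewrite inE; exact/injectiveP/linext_inj.
Qed.

Lemma deg_promotionE : deg_promotion P =
  n%:R + fiber_deviation%:R / #|labelings|%:R.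
Proof.
by rewrite /deg_promotion sum_promotion_fiber_sq natrD natrM mulrDl mulfK // addrC.
Qed.

Lemma card_le_deg_promotion : n%:R <= deg_promotion P.
Proof. by rewrite deg_promotionE lerDl divr_ge0 ?ler0n. Qed.

Lemma deg_promotion_eq_card : deg_promotion P = n%:R <-> fiber_deviation = 0%N.
Proof.
rewrite deg_promotionE; split => [/eqP|->]; last by rewrite mul0r addr0.
rewrite addrC -subr_eq0 addrK mulf_eq0 invr_eq0 (negbTE card_labelings_neq0).
by rewrite orbF pnatr_eq0 => /eqP.
Qed.

End Degree.

Local Open Scope ring_scope.

Theorem mainTheorem5 (d : Order.disp_t) (P : finPOrderType d) :
  rooted_tree_poset P ->
  ((#|P|%:R : rat) <= deg_promotion P /\
   (deg_promotion P = #|P|%:R <-> rooted_star_poset P)).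
Proof.
move=> tree; have [r top_r] := rooted_tree_top tree.
split; first exact: card_le_deg_promotion top_r.
exact: iff_trans (deg_promotion_eq_card top_r) (fiber_deviation_eq0 top_r tree).
Qed.
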